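(* Let $G$ be a graph and $W$ a walk of $G$. Let $E_o$ be the set of edges traversed by $W$ an odd number of times and $E_e$ the set of edges traversed by $W$ a non-zero even number of times. Then $W$ is equivalent to a walk $W_S$ that follows a walk $S$ of $G$ in which each edge of $E_o$ appears exactly once and each edge of $E_e$ appears at most twice.
   Context: A walk of a graph $G$ is a sequence of vertices $u_0u_1\dots u_l$ with $u_tu_{t+1}\in E(G)$ for all $t$ (vertices and edges may repeat). A walk $W'$ follows the walk $W=u_0\dots u_l$ if there are non-negative integers $i_0,\dots,i_{l-1}$ such that $W'=u_0(u_1u_0)^{i_0}u_1(u_2u_1)^{i_1}\dots u_{l-1}(u_lu_{l-1})^{i_{l-1}}u_l$, where $(u_{t+1}u_t)^{i}$ denotes $i$ successive half-turns (going from $u_t$ to $u_{t+1}$ and back) inserted after $u_t$; i.e., $W'$ is obtained by traversing $W$ from start to end and inserting half-turns $u_{t+1}u_tu_{t+1}$ along the edges. Two walks are equivalent if their multisets of traversed edges are equal. *)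

From mathcomp Require Import all_boot.
Set Implicit Arguments. Unset Strict Implicit. Unset Printing Implicit Defensive.

(* A (simple) graph on a finite vertex type T is given by a symmetric,
   irreflexive adjacency relation e.  Edges are unordered pairs {u,v},
   represented as the set [set u; v]. *)

Section Walks.
Variable T : finType.

Definition is_walk (e : rel T) (W : seq T) : bool :=
  if W is x :: s then path e x s else false.

Definition walk_edges (W : seq T) : seq {set T} :=
  [seq [set p.1; p.2] | p <- zip W (behead W)].

Definition edge_mult (W : seq T) (x y : T) : nat :=
  count_mem [set x; y] (walk_edges W).

Definition walk_equiv (W1 W2 : seq T) : Prop :=
  perm_eq (walk_edges W1) (walk_edges W2).

(* follow_expand x [u_1;...;u_l] [i_0;...;i_{l-1}] =
   x (u_1 x)^{i_0} u_1 (u_2 u_1)^{i_1} ... u_{l-1} (u_l u_{l-1})^{i_{l-1}} u_l *)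
Fixpoint follow_expand (x : T) (s : seq T) (ns : seq nat) : seq T :=
  match s, ns with
  | y :: s', i :: ns' => x :: flatten (nseq i [:: y; x]) ++ follow_expand y s' ns'
  | _, _ => [:: x]
  end.

Definition follows (W' W : seq T) : Prop :=
  match W with
  | x :: s => exists ns : seq nat, size ns = size s /\ W' = follow_expand x s ns
  | [::] => False
  end.
End Walks.

From mathcomp Require Import all_boot.
From mathcomp Require Import zify.
Set Implicit Arguments. Unset Strict Implicit. Unset Printing Implicit Defensive.

(* If an edge {u,v} is traversed at least three times, two of the traversals
   go in the same direction, W = A u v B u v C, and the shortcut
   A u (rev B) v C is again a walk (it uses no new edge) traversing {u,v}
   two fewer times and every other edge as often as W.  Iterating yields a
   walk S with the same edges and parities as W and every multiplicity at most
   2.  The traversals removed come in pairs, so inserting that many half-turns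
   at some occurrence of each edge of S restores exactly the edge multiset of
   W. *)

Section WalkEdges.
Variable T : finType.
Implicit Types (S : seq T) (X : {set T}).

Lemma mem_count_gt0 (U : eqType) (x : U) (s : seq U) :
  (x \in s) = (0 < count_mem x s).
Proof. by rewrite -has_pred1 has_count. Qed.

Lemma eq_set2 (a b u v : T) : u != v ->
  ([set a; b] == [set u; v]) = (a == u) && (b == v) || (a == v) && (b == u).
Proof.
move=> uv; apply/eqP/idP => [E|]; last first.
  by case/orP=> /andP[/eqP-> /eqP->] //; rewrite setUC.
have : u \in [set a; b] by rewrite E !inE eqxx.
have : v \in [set a; b] by rewrite E !inE eqxx orbT.
rewrite !inE.
by case/orP=> /eqP vE; case/orP=> /eqP uE; move: uv;
  rewrite vE uE ?eqxx //= ?andbT ?orbT.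
Qed.

Lemma walk_edges_cons2 (a b : T) s :
  walk_edges [:: a, b & s] = [set a; b] :: walk_edges (b :: s).
Proof. by []. Qed.

Lemma walk_edges_cat A (x : T) s :
  walk_edges (A ++ x :: s) = walk_edges (rcons A x) ++ walk_edges (x :: s).
Proof.
elim: A => [|a [|b A] IH] //.
by rewrite cat_cons rcons_cons !walk_edges_cons2 IH.
Qed.

Lemma walk_edges_rev S : walk_edges (rev S) = rev (walk_edges S).
Proof.
elim: S => [|x [|y s] IH] //.
rewrite walk_edges_cons2 (rev_cons x) (rev_cons _ (walk_edges _)) -cats1.
rewrite rev_cons cat_rcons walk_edges_cat -rev_cons IH.
by rewrite walk_edges_cons2 setUC cats1.
Qed.

Lemma count_shortcut (A B C : seq T) (u v : T) X :
  count_mem X (walk_edges (A ++ [:: u, v & B ++ [:: u, v & C]])) =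
  count_mem X (walk_edges (A ++ u :: rev B ++ v :: C)) + 2 * (X == [set u; v]).
Proof.
rewrite !(walk_edges_cat A) walk_edges_cons2 (walk_edges_cat (v :: B) u).
rewrite walk_edges_cons2 (walk_edges_cat (u :: rev B)).
have -> : rcons (u :: rev B) v = rev (rcons (v :: B) u).
  by rewrite rev_rcons rev_cons.
rewrite walk_edges_rev !count_cat /= count_rev count_cat /= (eq_sym X); lia.
Qed.

Definition arc_count (u v : T) S := count_mem (u, v) (zip S (behead S)).

Lemma count_edge_arcs (u v : T) S : u != v ->
  count_mem [set u; v] (walk_edges S) = arc_count u v S + arc_count v u S.
Proof.
move=> uv; elim: S => [|x [|y s] IH] //.
rewrite walk_edges_cons2 /arc_count /= -/(arc_count u v _) -/(arc_count v u _).
rewrite IH eq_set2 // !xpair_eqE.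
by case: (eqVneq x u) => [->|_]; case: (eqVneq y v) => [->|_];
  rewrite /= ?(negbTE uv) ?(eq_sym v u) ?(negbTE uv) /=; lia.
Qed.

Lemma mem_arcs_split (u v : T) S : (u, v) \in zip S (behead S) ->
  exists A C, S = A ++ [:: u, v & C].
Proof.
elim: S => [|x [|y s] IH] //.
rewrite /= in_cons => /orP[/eqP[-> ->]|/IH[A [C ->]]]; first by exists [::], s.
by exists (x :: A), C.
Qed.

Lemma arc_count_gt1_split (u v : T) S : u != v -> 1 < arc_count u v S ->
  exists A B C, S = A ++ [:: u, v & B ++ [:: u, v & C]].
Proof.
move=> uv; elim: S => [|x [|y s] IH] //.
rewrite /arc_count /=; case: (eqVneq (x, y) (u, v)) => [[-> ->]|_] /=.
  rewrite add1n ltnS -mem_count_gt0 => /mem_arcs_split[[|a A] [C]] [].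
    by move/eqP; rewrite eq_sym (negbTE uv).
  by move=> _ ->; exists [::], A, C.
by move/IH=> [A [B [C ->]]]; exists (x :: A), B, C.
Qed.

Lemma follow_expand_behead (x : T) s ns :
  x :: behead (follow_expand x s ns) = follow_expand x s ns.
Proof. by case: s => [|y s]; case: ns. Qed.

Lemma walk_edges_half_turns (x y : T) i r :
  walk_edges (x :: flatten (nseq i [:: y; x]) ++ y :: r) =
  nseq i.*2.+1 [set x; y] ++ walk_edges (y :: r).
Proof.
elim: i => [|i IH] //.
by rewrite doubleS /= !walk_edges_cons2 IH setUC.
Qed.

(* The c X half-turns along the edge X are all inserted at its first
   traversal. *)
Lemma follow_expand_count (x : T) s (c : {set T} -> nat) :
  (forall X, X \notin walk_edges (x :: s) -> c X = 0) ->
  exists2 ns, size ns = size s & forall X,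
    count_mem X (walk_edges (follow_expand x s ns)) =
    count_mem X (walk_edges (x :: s)) + 2 * c X.
Proof.
elim: s x c => [|y s IH] x c c0.
  by exists [::] => // X; rewrite c0.
pose c' X := if X == [set x; y] then 0 else c X.
have [|ns sz_ns count_ns] := IH y c'.
  move=> X XN; rewrite /c'; case: eqP => // /eqP XF; apply: c0.
  by rewrite walk_edges_cons2 in_cons negb_or XF.
exists (c [set x; y] :: ns) => [|X]; first by rewrite /= sz_ns.
rewrite /= -follow_expand_behead walk_edges_half_turns follow_expand_behead.
rewrite count_cat count_ns count_nseq /= -/(walk_edges (y :: s)) /c' (eq_sym X).
by case: eqP => [<-|_] /=; lia.
Qed.

End WalkEdges.

Section Shortcuts.
Variables (T : finType) (e : rel T).
Hypotheses (e_sym : symmetric e) (e_irr : irreflexive e).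
Implicit Types (S : seq T) (X : {set T}).

Definition is_edge X := [exists a, exists b, e a b && (X == [set a; b])].

Lemma is_edge_set2 (a b : T) : is_edge [set a; b] = e a b.
Proof.
apply/existsP/idP => [[c /existsP[d /andP[ecd]]]|eab]; last first.
  by exists a; apply/existsP; exists b; rewrite eab eqxx.
have cd : c != d by apply: contraTneq ecd => ->; rewrite e_irr.
rewrite eq_set2 // => /orP[] /andP[/eqP-> /eqP->] //; by rewrite e_sym.
Qed.

Lemma path_edges (x : T) s : path e x s = all is_edge (walk_edges (x :: s)).
Proof. by elim: s x => [|y s IH] x //=; rewrite is_edge_set2 IH. Qed.

Lemma walk_edge_adj S (a b : T) :
  is_walk e S -> [set a; b] \in walk_edges S -> e a b.
Proof.
case: S => [|x s] //= /[!path_edges] /allP walkS /walkS.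
by rewrite is_edge_set2.
Qed.

Lemma is_walk_subedges S S' : is_walk e S -> S' != [::] ->
  {subset walk_edges S' <= walk_edges S} -> is_walk e S'.
Proof.
case: S => [|x s] //; case: S' => [|x' s'] //= /[!path_edges] /allP walkS _ sub.
by apply/allP => X /sub /walkS.
Qed.

Lemma shortcut_arcs S (u v : T) : is_walk e S -> u != v ->
  1 < arc_count u v S ->
  exists S0, [/\ is_walk e S0, size S0 < size S & forall X,
    count_mem X (walk_edges S) =
    count_mem X (walk_edges S0) + 2 * (X == [set u; v])].
Proof.
move=> walkS uv /(arc_count_gt1_split uv)[A [B [C ?]]]; subst S.
exists (A ++ u :: rev B ++ v :: C); split; last exact: count_shortcut.
- apply: (is_walk_subedges walkS); first by case: (A).
  by move=> X; rewrite !mem_count_gt0 count_shortcut; lia.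
- by rewrite !size_cat /= !size_cat size_rev /=; lia.
Qed.

(* Of three traversals of {u,v}, two go in the same direction. *)
Lemma shortcut_walk S (u v : T) : is_walk e S -> u != v ->
  2 < count_mem [set u; v] (walk_edges S) ->
  exists S0, [/\ is_walk e S0, size S0 < size S & forall X,
    count_mem X (walk_edges S) =
    count_mem X (walk_edges S0) + 2 * (X == [set u; v])].
Proof.
move=> walkS uv; rewrite count_edge_arcs // => gt2.
have [|vu] := ltnP 1 (arc_count u v S); first exact: shortcut_arcs.
have [||S0 [walkS0 sizeS0 countS0]] := @shortcut_arcs S v u walkS.
- by rewrite eq_sym.
- lia.
by exists S0; split=> // X; rewrite countS0 setUC.
Qed.

Lemma reduced_walk S : is_walk e S ->
  exists S' (d : {set T} -> nat), [/\ is_walk e S',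
    forall X,
      count_mem X (walk_edges S) = count_mem X (walk_edges S') + 2 * d X,
    forall X, count_mem X (walk_edges S') <= 2 &
    {subset walk_edges S <= walk_edges S'}].
Proof.
have [n] := ubnP (size S); elim: n S => // n IH S /ltnSE sizeS walkS.
have [/hasP[X XS cX]|/hasPn small] :=
  boolP (has (fun X => 2 < count_mem X (walk_edges S)) (walk_edges S)); last first.
  exists S, (fun=> 0); split=> // X; rewrite ?addn0 // leqNgt.
  by case: (boolP (X \in walk_edges S)) => [/small|/count_memPn->].
have /mapP[[a b] _ /= XE] := XS; subst X.
have ab : a != b.
  by apply: contraTneq (walk_edge_adj walkS XS) => ->; rewrite e_irr.
have [S0 [walkS0 sizeS0 countS0]] := shortcut_walk walkS ab cX.
have [|S' [d [walkS' countS' small sub]]] := IH S0 _ walkS0; first lia.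
exists S', (fun X => d X + (X == [set a; b])); split=> // [X|X].
  by rewrite countS0 countS' /=; lia.
move=> XS1; apply: sub; move: XS1 cX.
rewrite !mem_count_gt0 !countS0 eqxx.
by case: (eqVneq X [set a; b]) => [->|_]; lia.
Qed.

Lemma is_walk_follow_expand (x : T) s ns :
  is_walk e (x :: s) -> is_walk e (follow_expand x s ns).
Proof.
elim: s x ns => [|y s IH] x [|i ns] //= /andP[exy walk_ys].
rewrite -follow_expand_behead; elim: i => [|i IHi] /=.
  by rewrite exy; move: (IH y ns walk_ys); rewrite -follow_expand_behead.
by rewrite exy e_sym exy.
Qed.

End Shortcuts.

Theorem proposition4p4 (T : finType) (e : rel T)
  (e_sym : symmetric e) (e_irr : irreflexive e) (W : seq T) :
  is_walk e W ->
  exists S WS : seq T,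
    is_walk e S /\ is_walk e WS /\ follows WS S /\ walk_equiv W WS /\
    (forall x y, e x y -> odd (edge_mult W x y) -> edge_mult S x y = 1) /\
    (forall x y, e x y -> ~~ odd (edge_mult W x y) -> 0 < edge_mult W x y ->
       edge_mult S x y <= 2).
Proof.
move=> walkW.
have [[|x s] [d [walkS countW small sub]]] //:= reduced_walk e_sym e_irr walkW.
have [|ns size_ns countWS] := @follow_expand_count _ x s d.
  move=> X notinS; have := countW X.
  by rewrite (count_memPn notinS) (count_memPn (contra (@sub X) notinS)); lia.
exists (x :: s), (follow_expand x s ns).
split=> //; split; first exact: is_walk_follow_expand.
split; first by exists ns.
split; first by apply/allP => X _ /=; rewrite countWS countW.
split.
- move=> u v _; rewrite /edge_mult countW oddD oddM addbF.
  by have := small [set u; v]; case: (count_mem _ _) => [|[|[|]]].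
- by move=> u v _ _ _; apply: small.
Qed.
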